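(* Let $q\ge 4$ be a prime power and $\rho(q)=\min\{\rho_q(u,v): u,v\in\mathcal{D}_q\}$. Then $\rho(q)=0$ if $3$ divides $q-1$, and $\rho(q)=2$ otherwise.
   Context: $\mathbb{F}_q$ is the finite field with $q$ elements. Hamming distance $d(u,v)=|\{i:u_i\ne v_i\}|$ on $\mathbb{F}_q^3$; $B(u)=\{v: d(u,v)\le 1\}$; $E(u)=\bigcup_{\lambda\in\mathbb{F}_q}B(\lambda u)$. $\mathcal{D}_q=\{(u_1,u_2,u_3)\in\mathbb{F}_q^3: u_1,u_2,u_3 \text{ pairwise distinct and nonzero}\}$, $\widetilde{B}(u)=B(u)\cap\mathcal{D}_q$, $\widetilde{E}(u)=E(u)\cap\mathcal{D}_q$. For $u,v\in\mathbb{F}_q^3$, $\rho_q(u,v)=0$ if $|\widetilde{E}(u)|=0$ or $|\widetilde{E}(v)|=0$, and otherwise $\rho_q(u,v)=\sum_{\mu\in\mathbb{F}_q^*}|\widetilde{B}(u)\cap\widetilde{B}(\mu v)|$. *)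

From HB Require Import structures.
From mathcomp Require Import all_boot all_order all_algebra all_field.
Set Implicit Arguments. Unset Strict Implicit. Unset Printing Implicit Defensive.
Import GRing.Theory.
Local Open Scope ring_scope.

Section Defs.
Variable F : finFieldType.
Definition vec3 := {ffun 'I_3 -> F}.

Definition vscale (lam : F) (u : vec3) : vec3 := [ffun i => lam * u i].

Definition hdist (u v : vec3) : nat := #|[set i : 'I_3 | u i != v i]|.

Definition ball1 (u : vec3) : {set vec3} := [set v | (hdist u v <= 1)%N].

Definition Eset (u : vec3) : {set vec3} := \bigcup_(lam : F) ball1 (vscale lam u).

Definition Dset : {set vec3} :=
  [set u : vec3 | [forall i, u i != 0] &&
                  [forall i, forall j, (i != j) ==> (u i != u j)]].

Definition Bt (u : vec3) : {set vec3} := ball1 u :&: Dset.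
Definition Et (u : vec3) : {set vec3} := Eset u :&: Dset.

Definition rho_q (u v : vec3) : nat :=
  if (#|Et u| == 0)%N || (#|Et v| == 0)%N then 0%N
  else (\sum_(mu : F | mu != 0%R) #|Bt u :&: Bt (vscale mu v)|)%N.
End Defs.

From HB Require Import structures.
From mathcomp Require Import all_boot all_order all_algebra all_field.
From mathcomp Require Import fingroup pgroup cyclic.
Set Implicit Arguments. Unset Strict Implicit. Unset Printing Implicit Defensive.
Import GRing.Theory FinRing.Theory.
Local Open Scope ring_scope.

(* A vector w in B(u) and in B(mu v) agrees with u off one coordinate and with
   mu v off another, so u and mu v share a coordinate i and mu = u_i / v_i.
   If two of these ratios coincide, u and mu v agree in two places and the q - 3
   admissible values of the remaining coordinate give q - 3 >= 2 common
   neighbours in D_q.  Otherwise mu_i = u_i / v_i contributes the vectors obtained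
   from u by replacing one of its other coordinates by that of mu_i v; both fail
   to lie in D_q only when u is mu_i v with its two other coordinates exchanged.
   If that happens at two indices, v is proportional to its image under a
   3-cycle, and the factor is a nontrivial cube root of unity, so 3 | q - 1.
   For u = (1, g^2, g) and v = (1, g, g^2) the only candidates are
   (1, g^2, g^3) for mu = g and (g^-1, g^2, g) for mu = g^-1, both in D_q iff
   g^3 <> 1: a primitive cube root of unity gives rho = 0, and any g outside
   {0, 1, -1} gives rho <= 2. *)

Lemma ord3_cases (i : 'I_3) : [\/ i = 0, i = 1 | i = 2].
Proof.
by case: i => -[|[|[|?]]] ? //; [constructor 1 | constructor 2 | constructor 3];
  apply: val_inj.
Qed.

Lemma ord3_cover (i j k : 'I_3) : i != j -> i != k -> j != k ->
  forall l, [|| l == i, l == j | l == k].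
Proof.
by case: i j k => -[|[|[|?]]] ? [[|[|[|?]]] ?] [[|[|[|?]]] ?] //= _ _ _ [[|[|[|?]]] ?].
Qed.

Lemma ord3_third (i k : 'I_3) : i != k -> exists2 j, j != i & j != k.
Proof.
by move=> ik; exists (- (i + k)); case: i k ik => -[|[|[|?]]] ? [[|[|[|?]]] ?].
Qed.

Lemma ord3_others (k : 'I_3) : exists i j, [/\ i != j, i != k & j != k].
Proof. by exists (k + 1), (k + 2); case: k => -[|[|[|?]]] ?. Qed.

Lemma ord3_inj (T : eqType) (f : 'I_3 -> T) :
  f 0 != f 1 -> f 0 != f 2 -> f 1 != f 2 -> injective f.
Proof.
move=> f01 f02 f12 i j.
by case: (ord3_cases i) => ->; case: (ord3_cases j) => -> // /eqP;
  rewrite ?(negbTE f01) ?(negbTE f02) ?(negbTE f12) // eq_sym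
    ?(negbTE f01) ?(negbTE f02) ?(negbTE f12).
Qed.


Section RhoQ.
Variable F : finFieldType.
Implicit Types (u v w : vec3 F) (mu t : F).

Definition set_coord u (k : 'I_3) t : vec3 F := [ffun l => if l == k then t else u l].

Definition mk3 (x y z : F) : vec3 F :=
  [ffun i : 'I_3 => match val i with 0 => x | 1 => y | _ => z end].

Definition overlap u v mu : {set vec3 F} := Bt u :&: Bt (vscale mu v).

Lemma DsetP u : reflect ((forall i, u i != 0) /\ injective u) (u \in Dset F).
Proof.
rewrite inE; apply: (iffP andP) => [[/forallP u0 /forallP uinj] | [u0 uinj]].
  split=> // i j /eqP; apply: contraTeq => ij; exact: implyP (forallP (uinj i) j) ij.
split; first exact/forallP.
by apply/forallP => i; apply/forallP => j; apply/implyP; apply: contra => /eqP/uinj->.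
Qed.

Lemma mk3_DsetE x y z : (mk3 x y z \in Dset F) =
  [&& x != 0, y != 0, z != 0, x != y, x != z & y != z].
Proof.
apply/DsetP/idP => [[nz inj] | /and5P[x0 y0 z0 xy /andP[xz yz]]].
  have neq i j : i != j -> mk3 x y z i != mk3 x y z j by apply: contra => /eqP/inj->.
  move: (nz 0) (nz 1) (nz 2) (neq 0 1 isT) (neq 0 2 isT) (neq 1 2 isT).
  by rewrite !ffunE => -> -> -> -> -> ->.
split; last by apply: ord3_inj; rewrite !ffunE.
by move=> i; case: (ord3_cases i) => ->; rewrite ffunE.
Qed.

Lemma hdist_le1P u w :
  reflect (exists k, forall l, l != k -> u l = w l) (hdist u w <= 1)%N.
Proof.
apply: (iffP idP) => [/card_le1_eqP diff1 | [k agree]].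
  have [k dk | none] := pickP [pred i | u i != w i].
    by exists k => l; apply: contraNeq => dl; apply/eqP/diff1; rewrite inE.
  by exists 0 => l _; apply/eqP; move: (none l) => /negbFE.
rewrite /hdist; apply: leq_trans (_ : #|[set k]| <= 1)%N; last by rewrite cards1.
apply: subset_leq_card; apply/subsetP => l.
by rewrite !inE; apply: contraR => lk; rewrite agree.
Qed.

Lemma hdist_set_coord u k t : (hdist u (set_coord u k t) <= 1)%N.
Proof. by apply/hdist_le1P; exists k => l lk; rewrite ffunE (negbTE lk). Qed.

Lemma set_coord_in_D u k t : u \in Dset F -> t != 0 ->
  (forall l, l != k -> t != u l) -> set_coord u k t \in Dset F.
Proof.
move=> /DsetP[u0 uinj] t0 tu; apply/DsetP; split=> [i | i j]; rewrite !ffunE.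
  by case: ifP.
case: (eqVneq i k) => [-> | ik]; case: (eqVneq j k) => [-> | jk] //.
- by move/eqP; rewrite (negbTE (tu _ jk)).
- by move/esym/eqP; rewrite (negbTE (tu _ ik)).
- exact: uinj.
Qed.

Lemma overlapP u v mu w : reflect
  [/\ (hdist u w <= 1)%N, (hdist (vscale mu v) w <= 1)%N & w \in Dset F]
  (w \in overlap u v mu).
Proof.
by rewrite !inE; apply: (iffP idP) => [/andP[/andP[h1 wD] /andP[h2 _]] | [-> -> ->]].
Qed.

Lemma rho_qE u v : u \in Dset F -> v \in Dset F ->
  rho_q u v = (\sum_(mu : F | mu != 0%R) #|overlap u v mu|)%N.
Proof.
have Et_neq0 w : w \in Dset F -> (#|Et w| == 0)%N = false.
  move=> wD; apply/negbTE; rewrite -lt0n; apply/card_gt0P; exists w.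
  rewrite inE wD andbT; apply/bigcupP; exists 1 => //.
  by rewrite inE; apply/hdist_le1P; exists 0 => l _; rewrite ffunE mul1r.
by move=> uD vD; rewrite /rho_q !Et_neq0.
Qed.

Lemma card_notin (s : seq F) : (#|F| - size s <= #|[predC s]|)%N.
Proof. by rewrite -(cardC (mem s)) leq_subLR leq_add2r card_size. Qed.

Section SumOfCards.
Variables (T : finType) (X : F -> {set T}).

Lemma card_le_sum_card mu : mu != 0 ->
  (#|X mu| <= \sum_(nu : F | nu != 0%R) #|X nu|)%N.
Proof. by move=> mu0; rewrite (bigD1 mu) //= leq_addr. Qed.

Lemma sum_card_ge2 mu1 mu2 : mu1 != 0 -> mu2 != 0 -> mu1 != mu2 ->
  X mu1 != set0 -> X mu2 != set0 -> (2 <= \sum_(mu : F | mu != 0%R) #|X mu|)%N.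
Proof.
move=> mu1_0 mu2_0 mu12 X1 X2.
rewrite (bigD1 mu1) //= (bigD1 mu2) /=; last by rewrite mu2_0 eq_sym.
by rewrite addnA (leq_trans _ (leq_addr _ _)) // (@leq_add 1 1) // card_gt0.
Qed.

Lemma sum_card_le2 mu1 mu2 (x1 x2 : T) : mu1 != mu2 ->
  (forall mu x, x \in X mu -> (mu = mu1 /\ x = x1) \/ (mu = mu2 /\ x = x2)) ->
  (\sum_(mu : F | mu != 0%R) #|X mu| <= 2)%N.
Proof.
move=> mu12 onlyX.
have cardX mu : (#|X mu| <= (mu == mu1) + (mu == mu2))%N.
  case: (eqVneq mu mu1) => [-> | mu_1].
    rewrite (negbTE mu12) /= addn0 -(cards1 x1).
    apply: subset_leq_card; apply/subsetP => x /onlyX.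
    by rewrite inE => -[[_ ->] | [e _]] //; rewrite e eqxx in mu12.
  case: (eqVneq mu mu2) => [-> | mu_2] /=.
    rewrite -(cards1 x2); apply: subset_leq_card; apply/subsetP => x /onlyX.
    by rewrite inE => -[[e _] | [_ ->]] //; rewrite e eqxx in mu12.
  rewrite leqn0 cards_eq0; apply/eqP/setP => x; rewrite inE.
  apply/negbTE/negP => /onlyX[] [e _].
    by rewrite e eqxx in mu_1.
  by rewrite e eqxx in mu_2.
have sum_eq1 m : (\sum_(mu : F) (mu == m) = 1)%N.
  by rewrite (bigD1 m) //= eqxx big1 // => mu /negbTE->.
apply: leq_trans (_ : \sum_mu ((mu == mu1) + (mu == mu2)) <= 2)%N.
  rewrite [X in (_ <= X)%N](bigID (fun mu => mu != 0)) /=.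
  by apply: leq_trans (leq_addr _ _); apply: leq_sum.
by rewrite big_split /= !sum_eq1.
Qed.
End SumOfCards.

Lemma Dset_ratio_neq0 u v i : u \in Dset F -> v \in Dset F -> u i / v i != 0.
Proof. by move=> /DsetP[u0 _] /DsetP[v0 _]; rewrite mulf_neq0 ?invr_eq0. Qed.

Definition swapped_at u v (i j k : 'I_3) :=
  (u j == u i / v i * v k) && (u k == u i / v i * v j).

Lemma swapped_atC u v i j k : swapped_at u v i j k = swapped_at u v i k j.
Proof. exact: andbC. Qed.

Section DistinctIndices.
Variables (u v : vec3 F) (i j k : 'I_3).
Hypotheses (uD : u \in Dset F) (vD : v \in Dset F).
Hypotheses (ij : i != j) (ik : i != k) (jk : j != k).

Let cover := ord3_cover ij ik jk.

Let ratio_neq0 l : u l / v l != 0 := Dset_ratio_neq0 l uD vD.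

Let ratioK l : u l / v l * v l = u l.
Proof. by have [v0 _] := DsetP _ vD; rewrite divfK. Qed.

Lemma set_coord_in_overlap : u i / v i * v k != u j ->
  set_coord u k (u i / v i * v k) \in overlap u v (u i / v i).
Proof.
move=> kj; have [v0 vinj] := DsetP _ vD; apply/overlapP; split.
- exact: hdist_set_coord.
- apply/hdist_le1P; exists j => l lj; rewrite !ffunE.
  by case/or3P: (cover l) => /eqP el; rewrite el ?eqxx // (negbTE ik) ratioK in lj *.
- apply: set_coord_in_D => // [|l lk]; first by rewrite mulf_neq0 ?ratio_neq0.
  case/or3P: (cover l) => /eqP el; rewrite el ?eqxx // in lk *.
  rewrite -{2}(ratioK i) (inj_eq (mulfI (ratio_neq0 i))).
  by apply: contra ik => /eqP/vinj->.
Qed.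

Lemma overlap_card_coincident : u i / v i = u j / v j ->
  (#|F| - 3 <= #|overlap u v (u i / v i)|)%N.
Proof.
move=> eij; apply: leq_trans (card_notin [:: 0; u i; u j]) _.
have inj : injective (set_coord u k).
  by move=> t t' /(congr1 (fun w => w k)); rewrite !ffunE eqxx.
rewrite -(card_imset _ inj); apply: subset_leq_card.
apply/subsetP => _ /imsetP[t tin ->].
rewrite !inE in tin; case/norP: tin => t0 /norP[ti tj]; apply/overlapP; split.
- exact: hdist_set_coord.
- apply/hdist_le1P; exists k => l lk; rewrite !ffunE (negbTE lk).
  by case/or3P: (cover l) => /eqP el; rewrite el ?eqxx // ?eij ratioK in lk *.
- apply: set_coord_in_D => // l lk.
  by case/or3P: (cover l) => /eqP el; rewrite el ?eqxx // in lk *.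
Qed.

Lemma swapped_at_cube_root1 : swapped_at u v i j k -> swapped_at u v j i k ->
  exists2 w : F, w ^+ 3 = 1 & w != 1.
Proof.
move=> /andP[/eqP uj /eqP uk] /andP[/eqP ui /eqP uk'].
have [v0 vinj] := DsetP _ vD.
set mu := u i / v i in uj uk; set nu := u j / v j in ui uk'.
have rescale x y : mu * x = nu * y -> x = nu / mu * y.
  by move=> e; rewrite mulrAC -e mulrC mulKf ?ratio_neq0.
have vk : v k = nu / mu * v j by apply: rescale; rewrite -uj ratioK.
have vj : v j = nu / mu * v i by apply: rescale; rewrite -uk uk'.
have vi : v i = nu / mu * v k by apply: rescale; rewrite ratioK ui.
exists (nu / mu).
  apply: (mulIf (v0 i)); rewrite mul1r {2}vi vk vj.
  by rewrite !exprS expr0 mulr1 !mulrA.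
by apply: contra_neq ij => l1; apply: vinj; rewrite vj l1 mul1r.
Qed.

End DistinctIndices.

Lemma cube_root1P : (exists2 w : F, w ^+ 3 = 1 & w != 1) <-> (3 %| #|F|.-1)%N.
Proof.
rewrite -card_finField_unit; split=> [[w w3 w1] | /(Cauchy (isT : prime 3))[x _ x3]].
  have wU : w \is a GRing.unit.
    by rewrite unitfE; apply: contra_neq w1 => w0; rewrite -w3 w0 expr0n.
  have <- : #[FinRing.unit F wU]%g = 3%N.
    apply/prime_nt_dvdP => //.
      by rewrite order_eq1; apply: contra_neq w1 => /(congr1 val).
    by rewrite order_dvdn; apply/eqP/val_inj; rewrite val_unitX.
  exact: order_dvdG (in_setT _).
exists (val x); first by rewrite -val_unitX -x3 expg_order.
have x_neq1 : x != 1%g by rewrite -order_eq1 x3.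
by apply: contra_neq x_neq1 => x1; apply: val_inj; rewrite x1 val_unit1.
Qed.

Lemma overlap_neq0 u v i j k : u \in Dset F -> v \in Dset F ->
  i != j -> i != k -> j != k -> ~~ swapped_at u v i j k ->
  overlap u v (u i / v i) != set0.
Proof.
move=> uD vD ij ik jk; rewrite negb_and !(eq_sym (u _)) => /orP[kj | jk'].
  apply/set0Pn; exists (set_coord u k (u i / v i * v k)).
  exact: set_coord_in_overlap uD vD ij ik jk kj.
apply/set0Pn; exists (set_coord u j (u i / v i * v j)).
by apply: set_coord_in_overlap uD vD ik ij _ jk'; rewrite eq_sym.
Qed.

Lemma rho_q_ge2_coincident u v i j k : (4 < #|F|)%N ->
  u \in Dset F -> v \in Dset F -> i != j -> i != k -> j != k ->
  u i / v i = u j / v j -> (2 <= rho_q u v)%N.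
Proof.
move=> q5 uD vD ij ik jk eij; rewrite rho_qE //.
apply: leq_trans (card_le_sum_card _ (Dset_ratio_neq0 i uD vD)).
apply: leq_trans (overlap_card_coincident uD vD ij ik jk eij).
by rewrite leq_subRL // (ltnW (ltnW q5)).
Qed.

Lemma rho_q_ge2_unswapped u v i j k : u \in Dset F -> v \in Dset F ->
  i != j -> i != k -> j != k -> u i / v i != u j / v j ->
  ~~ swapped_at u v i j k -> ~~ swapped_at u v j i k -> (2 <= rho_q u v)%N.
Proof.
move=> uD vD ij ik jk rij si sj; rewrite rho_qE //.
apply: (sum_card_ge2 (Dset_ratio_neq0 i uD vD) (Dset_ratio_neq0 j uD vD) rij).
  exact: overlap_neq0 uD vD ij ik jk si.
by apply: overlap_neq0 uD vD _ jk ik sj; rewrite eq_sym.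
Qed.

Lemma rho_q_ge2 u v : (4 < #|F|)%N -> ~~ (3 %| #|F|.-1)%N ->
  u \in Dset F -> v \in Dset F -> (2 <= rho_q u v)%N.
Proof.
move=> q5 q3 uD vD.
have [e01 | n01] := eqVneq (u 0 / v 0) (u 1 / v 1).
  exact: (rho_q_ge2_coincident (k := 2) q5 uD vD _ _ _ e01).
have [e02 | n02] := eqVneq (u 0 / v 0) (u 2 / v 2).
  exact: (rho_q_ge2_coincident (k := 1) q5 uD vD _ _ _ e02).
have [e12 | n12] := eqVneq (u 1 / v 1) (u 2 / v 2).
  exact: (rho_q_ge2_coincident (k := 0) q5 uD vD _ _ _ e12).
have one_swap i j k : i != j -> swapped_at u v i j k -> ~~ swapped_at u v j i k.
  move=> ij si; apply: contra q3 => sj; apply/cube_root1P.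
  exact: swapped_at_cube_root1 uD vD ij si sj.
have [s0 | ns0] := boolP (swapped_at u v 0 1 2).
  apply: (rho_q_ge2_unswapped (i := 1) (j := 2) (k := 0)) => //.
    by rewrite swapped_atC one_swap.
  by rewrite swapped_atC one_swap // swapped_atC.
have [s1 | ns1] := boolP (swapped_at u v 1 0 2).
  apply: (rho_q_ge2_unswapped (i := 0) (j := 2) (k := 1)) => //.
    by rewrite swapped_atC.
  by rewrite swapped_atC one_swap // swapped_atC.
exact: (rho_q_ge2_unswapped (i := 0) (j := 1) (k := 2)).
Qed.

Lemma overlap_shape u v mu w : v \in Dset F ->
  injective (fun i => u i / v i) -> w \in overlap u v mu ->
  exists i k, [/\ i != k, mu = u i / v i & w = set_coord u k (mu * v k)].
Proof.
move=> /DsetP[v0 _] rinj /overlapP[/hdist_le1P[k uw] /hdist_le1P[k' vw] _].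
have ratio l : l != k -> l != k' -> mu = u l / v l.
  by move=> lk lk'; rewrite uw // -vw // ffunE mulfK.
have [ek | k'k] := eqVneq k' k.
  have [i [j [ij ik jk]]] := ord3_others k.
  by subst k'; case/negP: ij; apply/eqP/rinj; rewrite -!ratio.
have [i ik' ik] := ord3_third k'k.
exists i, k; split; [by [] | exact: ratio |].
apply/ffunP => l; rewrite ffunE; have [-> | lk] := eqVneq l k; last by rewrite uw.
by rewrite -vw ?ffunE // eq_sym.
Qed.

Section Example.
Variable g : F.
Hypotheses (g0 : g != 0) (g2 : g ^+ 2 != 1).
Local Notation ex_u := (mk3 1 (g ^+ 2) g).
Local Notation ex_v := (mk3 1 g (g ^+ 2)).

Let g1 : g != 1. Proof. by apply: contra_neq g2 => ->; rewrite expr1n. Qed.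

Let g_neq_g2 : g != g ^+ 2.
Proof. by apply: contra_neq g1 => e; apply: (mulIf g0); rewrite mul1r -expr2 -e. Qed.

Lemma example_in_D : ex_u \in Dset F /\ ex_v \in Dset F.
Proof.
rewrite !mk3_DsetE oner_eq0 expf_neq0 // g0 !(eq_sym 1) g1 g2 g_neq_g2.
by rewrite eq_sym g_neq_g2.
Qed.

Let g_neq_ginv : g != g^-1.
Proof. by apply: contra_neq g2 => e; rewrite expr2 {2}e mulfV. Qed.

Let g2_div_g : g ^+ 2 / g = g.
Proof. by rewrite expr2 mulfK. Qed.

Let g_div_g2 : g / g ^+ 2 = g^-1.
Proof. by rewrite expr2 invfM mulrA mulfV ?mul1r. Qed.

Let ratio_inj : injective (fun i => ex_u i / ex_v i).
Proof.
apply: ord3_inj; rewrite !ffunE /= ?divr1 ?g2_div_g ?g_div_g2.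
- by rewrite eq_sym g1.
- by rewrite eq_sym invr_eq1 g1.
- exact: g_neq_ginv.
Qed.

Lemma example_overlap mu w : w \in overlap ex_u ex_v mu ->
  (mu = g /\ w = mk3 1 (g ^+ 2) (g ^+ 3)) \/ (mu = g^-1 /\ w = mk3 g^-1 (g ^+ 2) g).
Proof.
move=> wo; have /overlapP[_ _ /DsetP[_ winj]] := wo.
have clash a b : a != b -> w a = w b -> False.
  by move=> ab /winj eab; rewrite eab eqxx in ab.
have [i [k [ik -> wE]]] := overlap_shape (proj2 example_in_D) ratio_inj wo.
case: (ord3_cases i) ik wE => ->; case: (ord3_cases k) => -> // _;
  rewrite !ffunE /= ?divr1 ?mul1r ?g2_div_g ?g_div_g2 => wE.
- by case: (clash 1 2) => //; rewrite wE !ffunE.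
- by case: (clash 1 2) => //; rewrite wE !ffunE.
- by case: (clash 0 2) => //; rewrite wE !ffunE /= mulr1.
- left; split=> //; rewrite wE; apply/ffunP => l.
  by case: (ord3_cases l) => ->; rewrite !ffunE //= exprS.
- right; split=> //; rewrite wE; apply/ffunP => l.
  by case: (ord3_cases l) => ->; rewrite !ffunE //= mulr1.
- by case: (clash 0 1) => //; rewrite wE !ffunE /= mulVf.
Qed.

Lemma rho_q_example_le2 : (rho_q ex_u ex_v <= 2)%N.
Proof.
have [uD vD] := example_in_D; rewrite rho_qE //.
exact: sum_card_le2 g_neq_ginv example_overlap.
Qed.

Lemma rho_q_example_cube_root1 : g ^+ 3 = 1 -> rho_q ex_u ex_v = 0%N.
Proof.
move=> g3; have [uD vD] := example_in_D; rewrite rho_qE //.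
have ginv : g^-1 = g ^+ 2 by apply: (mulIf g0); rewrite mulVf // -exprSr g3.
apply: big1 => mu _; apply/eqP; rewrite cards_eq0; apply/eqP/setP => w.
rewrite in_set0; apply/negbTE/negP => wo; have /overlapP[_ _] := wo.
by case: (example_overlap wo) => -[_ ->]; rewrite mk3_DsetE ?g3 ?ginv eqxx !andbF.
Qed.

End Example.

End RhoQ.

Unset Implicit Arguments.

Theorem theorem17 (F : finFieldType) (hq : (4 <= #|F|)%N) :
  let r := if (3 %| #|F|.-1)%N then 0%N else 2%N in
  (exists u, exists v, u \in Dset F /\ v \in Dset F /\ rho_q u v = r) /\
  (forall u v, u \in Dset F -> v \in Dset F -> (r <= rho_q u v)%N).
Proof.
move=> r; rewrite /r; case: ifP => q3.
  split=> //; have [w w3 w1] := (cube_root1P F).2 q3.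
  have w0 : w != 0 by apply: contra_neq w1 => w0; rewrite -w3 w0 expr0n.
  have w2 : w ^+ 2 != 1 by apply: contra_neq w1 => w2; rewrite -w3 exprS w2 mulr1.
  have [uD vD] := example_in_D w0 w2.
  by exists (mk3 1 (w ^+ 2) w), (mk3 1 w (w ^+ 2)); rewrite rho_q_example_cube_root1.
have q5 : (4 < #|F|)%N by rewrite ltn_neqAle hq andbT; apply: contraFneq q3 => <-.
split; last by move=> u v uD vD; apply: rho_q_ge2; rewrite ?q3.
have /card_gt0P[g] : (0 < #|[predC [:: 0; 1; -1 : F]%R]|)%N.
  by apply: leq_trans (card_notin _); rewrite subn_gt0.
rewrite !inE => /norP[g0 /norP[g1 gN1]].
have g2 : g ^+ 2 != 1 by rewrite sqrf_eq1 negb_or g1.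
have [uD vD] := example_in_D g0 g2.
exists (mk3 1 (g ^+ 2) g), (mk3 1 g (g ^+ 2)); split=> //; split=> //.
by apply/eqP; rewrite eqn_leq rho_q_example_le2 // rho_q_ge2 ?q3.
Qed.
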